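(* Let $H$ be a complex Hilbert space and let $P \in \mathcal{L}(H)$ be a positive operator (i.e. $\langle Px,x\rangle \ge 0$ for all $x\in H$). Then: (i) $P$ satisfies the property $\mathcal{N}^*$ if and only if $[P]$ is an eigenvalue of $P$; (ii) $P$ satisfies the property $\mathcal{N}^*$ if and only if $[P]$ is an extreme point of the numerical range $W(P)$.
   Context: $\mathcal{L}(H)$ is the space of bounded linear operators on $H$. For $T \in \mathcal{L}(H)$, $[T] := \inf_{\|x\| = 1} \|Tx\|$; $T$ satisfies the property $\mathcal{N}^*$ if there exists $x_0 \in H$ with $\|x_0\| = 1$ and $\|Tx_0\| = [T]$. The numerical range is $W(T) := \{\langle Tx, x\rangle : x \in H,\ \|x\| = 1\} \subset \mathbb{C}$ (a convex set). A point $\alpha$ of a convex set $A \subset \mathbb{C}$ is an extreme point of $A$ if $\alpha = t u + (1-t) v$ with $u, v \in A$, $0<t<1$ implies $\alpha = u = v$. *)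

From HB Require Import structures.
From mathcomp Require Import all_boot all_order all_algebra.
From mathcomp Require Import complex.
From mathcomp Require Import classical_sets reals.
Set Implicit Arguments. Unset Strict Implicit. Unset Printing Implicit Defensive.
Import Order.TTheory GRing.Theory Num.Theory.
Local Open Scope ring_scope.
Local Open Scope classical_set_scope.
Local Open Scope complex_scope.

Section Hilbert.
Variables (R : realType) (V : lmodType R[i]) (ip : V -> V -> R[i]).

(* <.,.> is linear in the first argument, conjugate symmetric, positive definite.
   The order on R[i] is the standard one: 0 <= z iff z is real and nonnegative. *)
Definition inner_product : Prop :=
  [/\ (forall (a : R[i]) (x y z : V), ip (a *: x + y) z = a * ip x z + ip y z),
      (forall x y : V, ip y x = (ip x y)^*),
      (forall x : V, 0 <= ip x x)
    & (forall x : V, ip x x = 0 -> x = 0)].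

Definition hnorm (x : V) : R := Num.sqrt (complex.Re (ip x x)).

Definition hcomplete : Prop :=
  forall u : nat -> V,
    (forall e : R, 0 < e -> exists N : nat, forall m n : nat,
         (N <= m)%N -> (N <= n)%N -> hnorm (u m - u n) < e) ->
    exists l : V, forall e : R, 0 < e -> exists N : nat, forall n : nat,
         (N <= n)%N -> hnorm (u n - l) < e.

Definition is_hilbert : Prop := inner_product /\ hcomplete.

Definition bounded_linear (T : V -> V) : Prop :=
  (forall (a : R[i]) (x y : V), T (a *: x + y) = a *: T x + T y) /\
  (exists M : R, forall x : V, hnorm (T x) <= M * hnorm x).

Definition positive_op (T : V -> V) : Prop := forall x : V, 0 <= ip (T x) x.

Definition lower_bound (T : V -> V) : R :=
  inf [set hnorm (T x) | x in [set x : V | hnorm x = 1]].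

Definition propNstar (T : V -> V) : Prop :=
  exists x0 : V, hnorm x0 = 1 /\ hnorm (T x0) = lower_bound T.

Definition is_eigenvalue (T : V -> V) (l : R[i]) : Prop :=
  exists x : V, x != 0 /\ T x = l *: x.

Definition num_range (T : V -> V) : set R[i] :=
  [set ip (T x) x | x in [set x : V | hnorm x = 1]].

End Hilbert.

Definition extreme_point (R : realType) (A : set R[i]) (a : R[i]) : Prop :=
  A a /\
  forall (u v : R[i]) (t : R), A u -> A v -> 0 < t < 1 ->
    a = t%:C * u + (1 - t)%:C * v -> a = u /\ a = v.

(* For a positive operator P, [P] = m is attained at x0 iff the quadratic
   form of the positive operator P^2 - m^2 vanishes at x0, i.e. iff
   P^2 x0 = m^2 x0; then (P - m)(P + m) x0 = 0 yields an eigenvector for m.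
   The numerical range of P is a set of reals whose infimum is >= m (shift P
   by that infimum and compare |P y|^2 with <P y, y>), so an eigenvalue m is
   its minimum, hence an extreme point.  Conversely an extreme point m of a
   convex set of reals is its minimum or maximum, so P - m or m - P is
   positive with vanishing quadratic form at a unit vector x, and x is an
   eigenvector. *)

From HB Require Import structures.
From mathcomp Require Import all_boot all_order all_algebra.
From mathcomp Require Import complex.
From mathcomp Require Import boolp classical_sets reals.
From mathcomp Require Import lra ring.
Set Implicit Arguments. Unset Strict Implicit. Unset Printing Implicit Defensive.
Import Order.TTheory GRing.Theory Num.Theory.
Local Open Scope ring_scope.
Local Open Scope classical_set_scope.
Local Open Scope complex_scope.

Section RealExtremePoints.
Variable R : realType.

Lemma cplx_convex (t a b : R) :
  t%:C * a%:C + (1 - t)%:C * b%:C = (t * a + (1 - t) * b)%:C.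
Proof. by simpc. Qed.

Lemma extreme_point_min (A : set R) (a : R) :
  A a -> (forall b, A b -> a <= b) -> extreme_point [set b%:C | b in A] a%:C.
Proof.
move=> Aa amin; split; first by exists a.
move=> _ _ t [u Au <-] [v Av <-] /andP[t0 t1].
rewrite cplx_convex => /complexI Ea.
have := amin u Au; have := amin v Av => av au.
have -> : u = a by nra.
by have -> : v = a by nra.
Qed.

Lemma extreme_point_minmax (A : set R) (a : R) :
  extreme_point [set b%:C | b in A] a%:C ->
  (forall b, A b -> a <= b) \/ (forall b, A b -> b <= a).
Proof.
move=> [_ ext].
have [amin|/existsNP[u /not_implyP[Au /negP]]] := pselect (forall b, A b -> a <= b).
  by left.
rewrite -ltNge => ua; right; apply: contrapT => /existsNP[v /not_implyP[Av /negP]].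
rewrite -ltNge => av.
have uv : 0 < v - u by rewrite subr_gt0 (lt_trans ua).
pose t := (v - a) / (v - u).
have tE : t * (v - u) = v - a by rewrite divfK // gt_eqF.
have t0 : 0 < t by rewrite divr_gt0 // subr_gt0.
have t1 : t < 1 by rewrite ltr_pdivrMr // mul1r ltrD2l ltrN2.
have [| |||/complexI au _] := ext u%:C v%:C t; first by exists u.
- by exists v.
- by rewrite t0 t1.
- by rewrite cplx_convex; congr (_%:C); nra.
by move: ua; rewrite au ltxx.
Qed.

End RealExtremePoints.

Section Hilbert.
Variables (R : realType) (V : lmodType R[i]) (ip : V -> V -> R[i]).
Hypothesis ip_inner : inner_product ip.

Lemma ipDZl a x y z : ip (a *: x + y) z = a * ip x z + ip y z.
Proof. by case: ip_inner. Qed.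

Lemma ipC x y : ip y x = (ip x y)^*.
Proof. by case: ip_inner. Qed.

Lemma ip0l z : ip 0 z = 0.
Proof. by have := ipDZl (-1) 0 0 z; rewrite scaler0 addr0 mulN1r addNr. Qed.

Lemma ipDl x y z : ip (x + y) z = ip x z + ip y z.
Proof. by have := ipDZl 1 x y z; rewrite scale1r mul1r. Qed.

Lemma ipZl a x z : ip (a *: x) z = a * ip x z.
Proof. by rewrite -[a *: x]addr0 ipDZl ip0l addr0. Qed.

Lemma ipNl x z : ip (- x) z = - ip x z.
Proof. by rewrite -scaleN1r ipZl mulN1r. Qed.

Lemma ipDr x y z : ip z (x + y) = ip z x + ip z y.
Proof. by rewrite [LHS]ipC ipDl (ipC x z) (ipC y z) rmorphD. Qed.

Lemma ipZr a x z : ip z (a *: x) = a^* * ip z x.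
Proof. by rewrite [LHS]ipC ipZl (ipC x z) rmorphM. Qed.

(* The real part of [ip] is a real inner product; all estimates use it. *)
Definition ipr x y := complex.Re (ip x y).
Definition sqnorm x := ipr x x.

Lemma iprDl x y z : ipr (x + y) z = ipr x z + ipr y z.
Proof. by rewrite /ipr ipDl; case: (ip x z) => ? ?; case: (ip y z). Qed.

Lemma iprDr x y z : ipr z (x + y) = ipr z x + ipr z y.
Proof. by rewrite /ipr ipDr; case: (ip z x) => ? ?; case: (ip z y). Qed.

Lemma iprZl (c : R) x z : ipr (c%:C *: x) z = c * ipr x z.
Proof. by rewrite /ipr ipZl; case: (ip x z) => ? ? /=; simpc. Qed.

Lemma iprZr (c : R) x z : ipr z (c%:C *: x) = c * ipr z x.
Proof. by rewrite /ipr ipZr; case: (ip z x) => ? ? /=; simpc. Qed.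

Lemma iprNl x z : ipr (- x) z = - ipr x z.
Proof. by rewrite /ipr ipNl; case: (ip x z). Qed.

Lemma iprC x y : ipr x y = ipr y x.
Proof. by rewrite /ipr ipC; case: (ip y x). Qed.

Lemma ip_self x : ip x x = (sqnorm x)%:C.
Proof.
have [_ _ ip_ge0 _] := ip_inner.
rewrite /sqnorm /ipr; have := ger0_Im (ip_ge0 x).
by case: (ip x x) => a b /= ->.
Qed.

Lemma sqnorm_ge0 x : 0 <= sqnorm x.
Proof. by rewrite -ler0c -ip_self; case: ip_inner. Qed.

Lemma sqnorm_eq0 x : sqnorm x = 0 -> x = 0.
Proof. by case: ip_inner => _ _ _ ip_eq0 x0; apply: ip_eq0; rewrite ip_self x0. Qed.

Lemma sqnorm0 : sqnorm 0 = 0.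
Proof. by rewrite /sqnorm /ipr ip0l. Qed.

Lemma sqnormZ (c : R) x : sqnorm (c%:C *: x) = c ^+ 2 * sqnorm x.
Proof. by rewrite /sqnorm iprZl iprZr mulrA -expr2. Qed.

Lemma sqnormD x y : sqnorm (x + y) = sqnorm x + 2 * ipr x y + sqnorm y.
Proof. by rewrite /sqnorm iprDl !iprDr (iprC y x); ring. Qed.

Lemma ipr_le_sqnorm x y : 2 * ipr x y <= sqnorm x + sqnorm y.
Proof.
have := sqnorm_ge0 (x + (-1)%:C *: y).
by rewrite sqnormD iprZr sqnormZ; lra.
Qed.

Lemma hnorm_eq1 x : hnorm ip x = 1 <-> sqnorm x = 1.
Proof.
split=> [x1|x1]; last by rewrite /hnorm -/(ipr x x) -/(sqnorm x) x1 sqrtr1.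
by rewrite -[sqnorm x]sqr_sqrtr ?sqnorm_ge0 // [Num.sqrt _]x1 expr1n.
Qed.

Lemma unit_neq0 x : sqnorm x = 1 -> x != 0.
Proof.
by move=> x1; apply/eqP => x0; move: x1; rewrite x0 sqnorm0 => /eqP; rewrite eq_sym oner_eq0.
Qed.

Lemma homogeneous2_ge (f : V -> R) (a : R) :
  (forall (c : R) x, f (c%:C *: x) = c ^+ 2 * f x) ->
  (forall y, sqnorm y = 1 -> a <= f y) -> forall x, a * sqnorm x <= f x.
Proof.
move=> fZ fa x; have [x0|xn0] := eqVneq (sqnorm x) 0.
  have -> : x = 0 by exact: sqnorm_eq0.
  by have := fZ 0 0; rewrite scaler0 expr0n mul0r sqnorm0 mulr0 => ->.
have nx : 0 < sqnorm x by rewrite lt_def xn0 sqnorm_ge0.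
pose c := (Num.sqrt (sqnorm x))^-1.
have c2 : c ^+ 2 * sqnorm x = 1 by rewrite exprVn sqr_sqrtr ?sqnorm_ge0 // mulVf.
have := fa (c%:C *: x); rewrite sqnormZ fZ => /(_ c2) /(ler_wpM2r (ltW nx)).
by rewrite mulrAC c2 mul1r.
Qed.

Section LinearOperator.
Variables (T : V -> V) (Tlin : linear T).

Lemma opZ a x : T (a *: x) = a *: T x.
Proof. exact: scalable_linear. Qed.

Lemma opD x y : T (x + y) = T x + T y.
Proof. by rewrite -[x in LHS]scale1r Tlin scale1r. Qed.

Lemma linear_shift (c : R[i]) : linear (fun x => T x - c *: x).
Proof. by move=> a x y; rewrite Tlin scalerDr scalerBr !scalerA mulrC opprD addrACA. Qed.

Lemma linear_shiftN (c : R[i]) : linear (fun x => c *: x - T x).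
Proof. by move=> a x y; rewrite Tlin scalerDr scalerBr !scalerA mulrC opprD addrACA. Qed.

Lemma linear_sqr : linear (fun x => T (T x)).
Proof. by move=> a x y; rewrite !Tlin. Qed.

Lemma eigenvalue_unit (l : R[i]) :
  is_eigenvalue T l -> exists u, sqnorm u = 1 /\ T u = l *: u.
Proof.
case=> x [xn0 Tx]; have nx : sqnorm x != 0 by apply: contra_neq xn0 => /sqnorm_eq0.
pose c := (Num.sqrt (sqnorm x))^-1.
exists (c%:C *: x); split; first by rewrite sqnormZ exprVn sqr_sqrtr ?sqnorm_ge0 // mulVf.
by rewrite opZ Tx !scalerA mulrC.
Qed.

End LinearOperator.

Section PositiveOperator.
Variables (C : V -> V) (Clin : linear C) (Cpos : positive_op ip C).

Lemma ip_op_real x : ip (C x) x = (ipr (C x) x)%:C.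
Proof. by rewrite /ipr; have := ger0_Im (Cpos x); case: (ip (C x) x) => ? ? /= ->. Qed.

Lemma ipr_op_ge0 x : 0 <= ipr (C x) x.
Proof. by rewrite -ler0c -ip_op_real. Qed.

(* Polarization along [u + v] and [u + 'i v]. *)
Lemma positive_op_selfadj u v : ip (C u) v = ip u (C v).
Proof.
have := ip_op_real (u + v); have := ip_op_real (u + 'i *: v).
rewrite !(opD Clin) !(opZ Clin) !(ipDl, ipDr, ipZl, ipZr) (ipC (C v) u) !ip_op_real.
rewrite /ipr; case: (ip (C u) v) => a1 a2; case: (ip (C v) u) => b1 b2.
move: (complex.Re _) (complex.Re _) => p q.
by simpc => /eqP; rewrite eq_complex /= => /andP[_ /eqP h1] /eqP;
  rewrite eq_complex /= => /andP[_ /eqP h2]; apply/eqP; rewrite eq_complex /=;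
  apply/andP; split; apply/eqP; lra.
Qed.

Lemma ipr_op_sym u v : ipr (C u) v = ipr u (C v).
Proof. by rewrite /ipr positive_op_selfadj. Qed.

(* Positivity along the line [x + t C x] forces a vanishing linear term. *)
Lemma positive_op_kernel x : ipr (C x) x = 0 -> C x = 0.
Proof.
move=> Cx0; apply: sqnorm_eq0.
have line (t : R) : 0 <= 2 * t * sqnorm (C x) + t ^+ 2 * ipr (C (C x)) (C x).
  have := ipr_op_ge0 (x + t%:C *: C x).
  rewrite (opD Clin) (opZ Clin) !(iprDl, iprDr, iprZl, iprZr) Cx0 (ipr_op_sym (C x) x).
  by rewrite /sqnorm; nra.
have n0 := sqnorm_ge0 (C x); have r0 := ipr_op_ge0 (C x).
move: (sqnorm _) (ipr _ _) line n0 r0 => n r line n0 r0.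
have r1 : r + 1 != 0 by rewrite gt_eqF // ltr_wpDl.
have := line (- (n / (r + 1))); have := divfK r1 n.
have : 0 <= n / (r + 1) by rewrite divr_ge0 // addr_ge0.
by move: (n / (r + 1)) => s; nra.
Qed.

(* Positivity at [y - K^-1 C y]. *)
Lemma sqnorm_op_le (K : R) : 0 < K ->
  (forall w, ipr (C w) w <= K * sqnorm w) ->
  forall y, sqnorm (C y) <= K * ipr (C y) y.
Proof.
move=> K0 CK y; pose s := K^-1.
have sK : s * K = 1 by rewrite mulVf // gt_eqF.
have s0 : 0 < s by rewrite invr_gt0.
have := ipr_op_ge0 (y + (- s)%:C *: C y).
rewrite (opD Clin) (opZ Clin) !(iprDl, iprDr, iprZl, iprZr) (ipr_op_sym (C y) y).
have := CK (C y); have := sqnorm_ge0 (C y); rewrite /sqnorm.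
move: (ipr (C y) y) (ipr (C y) (C y)) (ipr (C (C y)) (C y)) => q n r h1 h2 h3.
have e3 : s * s * r <= s * s * (K * n) by apply: ler_wpM2l => //; nra.
have e2 : s * s * (K * n) = s * n by rewrite mulrA -(mulrA s s K) sK mulr1.
have hq : s * n <= q by nra.
by have := ler_wpM2l (ltW K0) hq; rewrite mulrA (mulrC K) sK mul1r.
Qed.

Lemma positive_op_sqr : positive_op ip (fun x => C (C x)).
Proof. by move=> x; rewrite positive_op_selfadj ip_self ler0c sqnorm_ge0. Qed.

Lemma ip_shift (c : R) x : ip (C x - c%:C *: x) x = (ipr (C x) x - c * sqnorm x)%:C.
Proof. by rewrite ipDl ipNl ipZl ip_op_real ip_self; simpc. Qed.

(* If [C^2 x = c^2 x], then [C x + c x] is an eigenvector for [c], unless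
   it vanishes, which positivity only allows for [c = 0]. *)
Lemma eigenvalue_of_sqr (c : R) x :
  0 <= c -> x != 0 -> C (C x) = (c ^+ 2)%:C *: x -> is_eigenvalue C c%:C.
Proof.
move=> c0 xn0 CCx; have [y0|yn0] := eqVneq (C x + c%:C *: x) 0; last first.
  exists (C x + c%:C *: x); split => //.
  by rewrite (opD Clin) (opZ Clin) CCx expr2 rmorphM scalerDr scalerA addrC.
have Cx : C x = - (c%:C *: x) by apply/eqP; rewrite -addr_eq0 y0.
have nx : 0 < sqnorm x.
  by rewrite lt_def sqnorm_ge0 andbT; apply: contra_neq xn0 => /sqnorm_eq0.
have := ipr_op_ge0 x; rewrite Cx iprNl iprZl /sqnorm => q0.
have {}c0 : c = 0 by apply/eqP; rewrite eq_le c0 andbT; rewrite /sqnorm in nx; nra.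
by exists x; split => //; rewrite Cx c0 rmorph0 !scale0r oppr0.
Qed.

End PositiveOperator.

Section Rayleigh.
Variables (C : V -> V) (Clin : linear C) (Cpos : positive_op ip C).

Lemma eigvec_of_qform_min (c : R) x :
  (forall y, c * sqnorm y <= ipr (C y) y) -> ipr (C x) x = c * sqnorm x ->
  C x = c%:C *: x.
Proof.
move=> cmin cx; apply/eqP; rewrite -subr_eq0; apply/eqP.
apply: (positive_op_kernel (linear_shift Clin c%:C)) => [y|].
  by rewrite /= (ip_shift Cpos) ler0c subr_ge0.
by rewrite /ipr /= (ip_shift Cpos) /= cx subrr.
Qed.

Lemma eigvec_of_qform_max (c : R) x :
  (forall y, ipr (C y) y <= c * sqnorm y) -> ipr (C x) x = c * sqnorm x ->
  C x = c%:C *: x.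
Proof.
move=> cmax cx; apply/eqP; rewrite -subr_eq0 -oppr_eq0 opprB; apply/eqP.
apply: (positive_op_kernel (linear_shiftN Clin c%:C)) => [y|].
  by rewrite /= -opprB ipNl (ip_shift Cpos) -rmorphN ler0c oppr_ge0 subr_le0.
by rewrite /ipr /= -opprB ipNl (ip_shift Cpos) /= cx subrr oppr0.
Qed.

End Rayleigh.

Section LowerBound.
Variables (P : V -> V) (Plin : linear P).

Notation m := (lower_bound ip P).

Lemma qformZ (c : R) x : ipr (P (c%:C *: x)) (c%:C *: x) = c ^+ 2 * ipr (P x) x.
Proof. by rewrite (opZ Plin) iprZl iprZr mulrA -expr2. Qed.

Lemma lower_bound_ge0 : 0 <= m.
Proof.
rewrite /lower_bound; set S := [set _ | _ in _].
have [S0|S0] := pselect (S !=set0).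
  by apply: lb_le_inf => // _ [x _ <-]; exact: sqrtr_ge0.
rewrite (_ : S = set0) ?inf0 //.
by apply/seteqP; split => // r Sr; apply: S0; exists r.
Qed.

Lemma sqr_lower_bound_le x : m ^+ 2 * sqnorm x <= sqnorm (P x).
Proof.
apply: (homogeneous2_ge (f := fun x => sqnorm (P x))) => [c y|y y1].
  by rewrite (opZ Plin) sqnormZ.
have my : m <= hnorm ip (P y).
  apply: ge_inf; first by exists 0 => _ [z _ <-]; exact: sqrtr_ge0.
  by exists y => //; apply/hnorm_eq1.
rewrite -[sqnorm (P y)]sqr_sqrtr ?sqnorm_ge0 //.
by rewrite ler_pXn2r // ?nnegrE ?lower_bound_ge0 // sqrtr_ge0.
Qed.

Lemma propNstarP : propNstar ip P <-> exists x, sqnorm x = 1 /\ sqnorm (P x) = m ^+ 2.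
Proof.
split=> -[x [x1 Px]]; exists x.
  by rewrite -Px /hnorm sqr_sqrtr ?sqnorm_ge0; split=> //; apply/hnorm_eq1.
split; first exact/hnorm_eq1.
by rewrite /hnorm -/(ipr _ _) -/(sqnorm _) Px sqrtr_sqr ger0_norm ?lower_bound_ge0.
Qed.

Lemma propNstar_of_eigenvalue : is_eigenvalue P m%:C -> propNstar ip P.
Proof.
move=> /(eigenvalue_unit Plin) [u [u1 Pu]].
by apply/propNstarP; exists u; rewrite Pu sqnormZ u1 mulr1.
Qed.

Hypothesis Ppos : positive_op ip P.

Lemma eigenvalue_of_propNstar : propNstar ip P -> is_eigenvalue P m%:C.
Proof.
move=> /propNstarP [x [x1 Px]].
have qPP y : ipr (P (P y)) y = sqnorm (P y) by rewrite (ipr_op_sym Plin Ppos).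
apply: (eigenvalue_of_sqr Plin Ppos lower_bound_ge0 (unit_neq0 x1)).
apply: (eigvec_of_qform_min (linear_sqr Plin) (positive_op_sqr Plin Ppos)).
  by move=> y; rewrite qPP sqr_lower_bound_le.
by rewrite qPP Px x1 mulr1.
Qed.

Lemma num_range_positive :
  num_range ip P = [set b%:C | b in [set ipr (P x) x | x in [set x | sqnorm x = 1]]].
Proof.
apply/seteqP; split=> _ [x x1 <-].
  by exists (ipr (P x) x); [exists x => //; apply/hnorm_eq1 | rewrite ip_op_real].
by case: x1 => y y1 <-; exists y; [apply/hnorm_eq1 | rewrite ip_op_real].
Qed.

Lemma propNstar_of_extreme_point :
  extreme_point (num_range ip P) m%:C -> propNstar ip P.
Proof.
rewrite num_range_positive => ext.
case: (ext) => -[_ [x x1 <-] /complexI qx] _.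
apply: propNstar_of_eigenvalue; exists x; split; first exact: unit_neq0.
have [qmin|qmax] := extreme_point_minmax ext.
- apply: (eigvec_of_qform_min Plin Ppos); last by rewrite x1 mulr1.
  by apply: homogeneous2_ge => [|y y1]; [exact: qformZ | apply: qmin; exists y].
- apply: (eigvec_of_qform_max Plin Ppos); last by rewrite x1 mulr1.
  move=> y; rewrite -lerN2 -mulNr.
  apply: (homogeneous2_ge (f := fun y => - ipr (P y) y)) => [c z|z z1].
    by rewrite qformZ mulrN.
  by rewrite lerN2; apply: qmax; exists z.
Qed.

Variable M : R.
Hypothesis PM : forall x, hnorm ip (P x) <= M * hnorm ip x.

Lemma sqnorm_op_bound x : sqnorm (P x) <= M ^+ 2 * sqnorm x.
Proof.
have := PM x; rewrite /hnorm -!/(ipr _ _) -!/(sqnorm _) => PMx.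
rewrite -[sqnorm (P x)]sqr_sqrtr ?sqnorm_ge0 // -[sqnorm x]sqr_sqrtr ?sqnorm_ge0 //.
move: PMx (sqrtr_ge0 (sqnorm (P x))) (sqrtr_ge0 (sqnorm x)).
by move: (Num.sqrt (sqnorm (P x))) (Num.sqrt (sqnorm x)) => s1 s2; nra.
Qed.

(* For [D = P - lam]: [|P y|^2 = |D y|^2 + 2 lam <D y, y> + lam^2], and
   [sqnorm_op_le] bounds [|D y|^2] by [(M^2 + 1) <D y, y>]. *)
Lemma sqnorm_op_le_qform (lam : R) :
  0 <= lam -> (forall y, sqnorm y = 1 -> lam <= ipr (P y) y) ->
  forall y, sqnorm y = 1 ->
  sqnorm (P y) <= (M ^+ 2 + 1 + 2 * lam) * (ipr (P y) y - lam) + lam ^+ 2.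
Proof.
move=> lam0 lam_le y y1; pose D x := P x - lam%:C *: x.
have qD x : ipr (D x) x = ipr (P x) x - lam * sqnorm x by rewrite /ipr /D ip_shift.
have Dlin : linear D by exact: linear_shift.
have Dpos : positive_op ip D.
  move=> x; rewrite ip_shift // ler0c subr_ge0.
  exact: (homogeneous2_ge (f := fun z => ipr (P z) z) qformZ).
have DK w : ipr (D w) w <= (M ^+ 2 + 1) * sqnorm w.
  rewrite qD; have := ipr_le_sqnorm (P w) w; have := sqnorm_op_bound w.
  by have := sqnorm_ge0 w; have := ipr_op_ge0 Ppos w; nra.
have K0 : 0 < M ^+ 2 + 1 by rewrite ltr_wpDl ?sqr_ge0.
have := sqnorm_op_le Dlin Dpos K0 DK y; rewrite qD y1 mulr1.
have PyE : sqnorm (P y) = sqnorm (D y) + 2 * lam * ipr (D y) y + lam ^+ 2.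
  have -> : P y = D y + lam%:C *: y by rewrite /D subrK.
  by rewrite sqnormD iprZr sqnormZ y1; ring.
rewrite PyE qD y1 mulr1; have := lam_le y y1.
by move: (ipr (P y) y) (sqnorm (D y)) => q n; nra.
Qed.

Lemma lower_bound_le_qform y : sqnorm y = 1 -> m <= ipr (P y) y.
Proof.
move=> y1; pose W := [set ipr (P x) x | x in [set x | sqnorm x = 1]].
have W0 : W !=set0 by exists (ipr (P y) y), y.
have Wlb : has_lbound W by exists 0 => _ [x _ <-]; exact: ipr_op_ge0.
have lam0 : 0 <= inf W by apply: lb_le_inf => // _ [x _ <-]; exact: ipr_op_ge0.
have lam_le x : sqnorm x = 1 -> inf W <= ipr (P x) x.
  by move=> x1; apply: ge_inf => //; exists x.
apply: le_trans (lam_le _ y1); rewrite leNgt; apply/negP => lam_m.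
set lam := inf W in lam0 lam_le lam_m.
pose K := M ^+ 2 + 1 + 2 * lam.
have K0 : 0 < K by rewrite /K -addrA ltr_wpDl ?sqr_ge0 // ltr_pwDl // mulr_ge0.
pose eps := (m ^+ 2 - lam ^+ 2) / K.
have epsE : eps * K = m ^+ 2 - lam ^+ 2 by rewrite divfK // gt_eqF.
have eps0 : 0 < eps.
  by rewrite divr_gt0 // subr_gt0 ltr_pXn2r // ?nnegrE ?lower_bound_ge0.
have /(inf_lt W0) [_ [z z1 <-] qz] : lam < lam + eps by rewrite ltrDl.
have := sqnorm_op_le_qform lam0 lam_le z1; rewrite -/K.
have := sqr_lower_bound_le z; rewrite z1 mulr1.
by move: (ipr _ _) (sqnorm _) qz => q n qz; nra.
Qed.

Lemma extreme_point_of_propNstar :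
  propNstar ip P -> extreme_point (num_range ip P) m%:C.
Proof.
move=> /eigenvalue_of_propNstar /(eigenvalue_unit Plin) [u [u1 Pu]].
rewrite num_range_positive; apply: extreme_point_min => [|_ [y y1 <-]].
  by exists u => //; rewrite Pu iprZl -/(sqnorm u) u1 mulr1.
exact: lower_bound_le_qform.
Qed.

End LowerBound.
End Hilbert.

Theorem proposition2p6 (R : realType) (V : lmodType R[i]) (ip : V -> V -> R[i])
    (P : V -> V) :
  is_hilbert ip -> bounded_linear ip P -> positive_op ip P ->
  (propNstar ip P <-> is_eigenvalue P (lower_bound ip P)%:C) /\
  (propNstar ip P <-> extreme_point (num_range ip P) (lower_bound ip P)%:C).
Proof.
move=> [ip_inner _] [Plin [M PM]] Ppos; split; split.
- exact: eigenvalue_of_propNstar.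
- exact: propNstar_of_eigenvalue.
- exact: extreme_point_of_propNstar PM.
- exact: propNstar_of_extreme_point.
Qed.
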